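(* Let $F\in[0,1]$, $0\le p\le F$, and let $\rho_k=p|\Psi_{00}\rangle\langle\Psi_{00}|+(1-p)\sigma_k\in S_{p,F}$ for $k=1,2$, where $\sigma_1,\sigma_2$ are density operators. Write $\tilde p'_{ij}=p'_{ij}(\sigma_1\otimes\sigma_2)$ and $\tilde F'_{ij}=F'_{ij}(\sigma_1\otimes\sigma_2)$. Then for all $i,j$, $$p'_{ij}(\rho_1\otimes\rho_2)=\frac p2-\frac{p^2}4+(1-p)^2\tilde p'_{ij},\qquad F'_{ij}(\rho_1\otimes\rho_2)=\frac{2pF-p^2+4(1-p)^2\tilde p'_{ij}\tilde F'_{ij}}{2p-p^2+4(1-p)^2\tilde p'_{ij}}.$$
   Context: For qubit registers $(R,T)$, $|\Psi_{ij}\rangle_{RT}=(I_R\otimes(X^iZ^j)_T)\tfrac1{\sqrt2}(|00\rangle+|11\rangle)$. $S_{p,F}$ is the set of two-qubit density operators $\rho$ with $\rho=p|\Psi_{00}\rangle\langle\Psi_{00}|+(1-p)\sigma$ for some density operator $\sigma$ and $\langle\Psi_{00}|\rho|\Psi_{00}\rangle=F$. For two-qubit states $\tau_1$ on $(A_1,B_1)$ and $\tau_2$ on $(A_2,B_2)$: $p'_{ij}(\tau_1\otimes\tau_2)=\mathrm{Tr}[|\Psi_{ij}\rangle\langle\Psi_{ij}|_{A_1A_2}\tau_1\otimes\tau_2]$ and $F'_{ij}(\tau_1\otimes\tau_2)=\frac1{p'_{ij}}\mathrm{Tr}[|\Psi_{ij}\rangle\langle\Psi_{ij}|_{B_1B_2}|\Psi_{ij}\rangle\langle\Psi_{ij}|_{A_1A_2}\tau_1\otimes\tau_2]$.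 The product $\tilde p'_{ij}\tilde F'_{ij}$ denotes $\mathrm{Tr}[|\Psi_{ij}\rangle\langle\Psi_{ij}|_{B_1B_2}|\Psi_{ij}\rangle\langle\Psi_{ij}|_{A_1A_2}\sigma_1\otimes\sigma_2]$. *)

(* Complex scalars: an arbitrary numClosedFieldType C
   (e.g. the complex numbers R[i] of a real closed field / realType). *)
From mathcomp Require Import all_boot all_order all_algebra.
From mathcomp Require Export mxtens.
Set Implicit Arguments. Unset Strict Implicit. Unset Printing Implicit Defensive.
Import Order.TTheory GRing.Theory Num.Theory.
Local Open Scope ring_scope.

Section Qubits.
Variable C : numClosedFieldType.

Definition adj (m n : nat) (A : 'M[C]_(m, n)) : 'M[C]_(n, m) :=
  map_mx Num.conj (trmx A).

Definition ket (a : 'I_2) : 'cV[C]_2 := delta_mx a 0.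
Definition ket0 : 'cV[C]_2 := ket 0.
Definition ket1 : 'cV[C]_2 := ket 1.

Definition PauliX : 'M[C]_2 := \matrix_(i < 2, j < 2) (if i == j then 0 else 1).
Definition PauliZ : 'M[C]_2 :=
  \matrix_(i < 2, j < 2) (if i == j then (if i == 0 then 1 else -1) else 0).

(* unnormalised |00> + |11> on registers (R,T) *)
Definition phi_plus : 'M[C]_(2 * 2, 1 * 1) := ket0 *t ket0 + ket1 *t ket1.

(* sqrt 2 * |Psi_ij> = (I_R (x) (X^i Z^j)_T) (|00> + |11>) *)
Definition psi_un (i j : 'I_2) : 'M[C]_(2 * 2, 1 * 1) :=
  (1%:M *t (PauliX ^+ i *m PauliZ ^+ j)) *m phi_plus.

(* |Psi_ij><Psi_ij| = 1/2 (sqrt 2 |Psi_ij>)(sqrt 2 <Psi_ij|) *)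
Definition bell (i j : 'I_2) : 'M[C]_(2 * 2) :=
  (1 / 2%:R) *: (psi_un i j *m adj (psi_un i j)).

Definition psd (n : nat) (A : 'M[C]_n) : Prop :=
  forall v : 'cV[C]_n, 0 <= (adj v *m A *m v) 0 0.
Definition density (n : nat) (A : 'M[C]_n) : Prop := psd A /\ \tr A = 1.

Definition fid00 (rho : 'M[C]_(2 * 2)) : C := \tr (bell 0 0 *m rho).

Definition S_pF (p F : C) (rho : 'M[C]_(2 * 2)) : Prop :=
  (exists sigma : 'M[C]_(2 * 2),
      density sigma /\ rho = p *: bell 0 0 + (1 - p) *: sigma)
  /\ fid00 rho = F.

(* Four qubits.  tau1 (x) tau2 lives on ((A1,B1),(A2,B2)) = tau1 *t tau2.
   SW is the permutation unitary |a1 b1 a2 b2> |-> |a1 a2 b1 b2>. *)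
Definition SW : 'M[C]_((2 * 2) * (2 * 2)) :=
  \sum_(a1 < 2) \sum_(b1 < 2) \sum_(a2 < 2) \sum_(b2 < 2)
    (((ket a1 *t ket a2) *t (ket b1 *t ket b2)) *m
      trmx ((ket a1 *t ket b1) *t (ket a2 *t ket b2))).

(* |Psi_ij><Psi_ij|_{A1A2} (x) I_{B1B2}, in the ((A1,B1),(A2,B2)) ordering *)
Definition projA (i j : 'I_2) : 'M[C]_((2 * 2) * (2 * 2)) :=
  adj SW *m (bell i j *t 1%:M) *m SW.
(* I_{A1A2} (x) |Psi_ij><Psi_ij|_{B1B2}, in the ((A1,B1),(A2,B2)) ordering *)
Definition projB (i j : 'I_2) : 'M[C]_((2 * 2) * (2 * 2)) :=
  adj SW *m (1%:M *t bell i j) *m SW.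

Definition pprime (tau1 tau2 : 'M[C]_(2 * 2)) (i j : 'I_2) : C :=
  \tr (projA i j *m (tau1 *t tau2)).
(* Tr[ |Psi_ij><Psi_ij|_{B1B2} |Psi_ij><Psi_ij|_{A1A2} tau1 (x) tau2 ]
   (= p'_{ij} F'_{ij}) *)
Definition pFprime (tau1 tau2 : 'M[C]_(2 * 2)) (i j : 'I_2) : C :=
  \tr (projB i j *m projA i j *m (tau1 *t tau2)).
Definition Fprime (tau1 tau2 : 'M[C]_(2 * 2)) (i j : 'I_2) : C :=
  pFprime tau1 tau2 i j / pprime tau1 tau2 i j.

End Qubits.

(* Both p'_ij(tau1 (x) tau2) and p'_ij F'_ij(tau1 (x) tau2) are bilinear in (tau1, tau2),
   so writing rho_k = p Phi + (1 - p) sigma_k with Phi = |Psi_00><Psi_00| reduces the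
   claim to the terms with Phi in one slot.  Once the register swap is undone these are
   index contractions governed by U = X^i Z^j being real orthogonal: the one-qubit
   marginals of every Bell state are maximally mixed, whence p'_ij(Phi (x) tau) = Tr tau / 4,
   and (U (x) U)|Phi+> = |Phi+>, whence the joint projection of Phi (x) tau has weight
   <Psi_00|tau|Psi_00> / 4.  The fidelity hypotheses say (1 - p) <Psi_00|sigma_k|Psi_00> = F - p. *)

From mathcomp Require Import all_boot all_order all_algebra.
From mathcomp Require Import ring.
Import Order.TTheory GRing.Theory Num.Theory.
Local Open Scope ring_scope.

Local Notation idx := mxtens_index.

Lemma sum_eq_mulr {R : pzSemiRingType} {I : finType} (y : I) (F : I -> R) :
  \sum_x (x == y)%:R * F x = F y.
Proof.
rewrite (bigD1 y) //= eqxx mul1r big1 ?addr0 // => x /negbTE->.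
by rewrite mul0r.
Qed.

Lemma sum_diag2 {R : pzSemiRingType} {I : finType} (F : I -> I -> R) :
  \sum_x \sum_y (x == y)%:R * F x y = \sum_x F x x.
Proof. by apply: eq_bigr => x _; under eq_bigr do rewrite eq_sym; exact: sum_eq_mulr. Qed.

Lemma sum4_eq12_eq34 {R : pzSemiRingType} {I : finType} (K : I -> I -> I -> I -> R) :
  \sum_a \sum_b \sum_c \sum_d ((a == b)%:R * (c == d)%:R) * K a b c d
  = \sum_a \sum_c K a a c c.
Proof.
have inner a b : \sum_c \sum_d ((a == b)%:R * (c == d)%:R) * K a b c d
                 = (a == b)%:R * \sum_c K a b c c.
  rewrite -sum_diag2 mulr_sumr; apply: eq_bigr => c _.
  by rewrite mulr_sumr; apply: eq_bigr => d _; rewrite mulrA.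
under eq_bigr do under eq_bigr do rewrite inner.
exact: sum_diag2.
Qed.

Lemma sum4_eq13_eq24 {R : pzSemiRingType} {I : finType} (K : I -> I -> I -> I -> R) :
  \sum_a \sum_b \sum_c \sum_d ((a == c)%:R * (b == d)%:R) * K a b c d
  = \sum_a \sum_b K a b a b.
Proof.
under eq_bigr do rewrite exchange_big.
exact: (sum4_eq12_eq34 (fun a c b d => K a b c d)).
Qed.

Lemma divr_mulr_cancel (F : fieldType) (x y z : F) : z != 0 -> x * z / (y * z) = x / y.
Proof. by move=> nz_z; rewrite invfM mulrACA divff // mulr1. Qed.

Lemma big_mxtens_index (V : nmodType) m n (F : 'I_(m * n) -> V) :
  \sum_k F k = \sum_i \sum_j F (idx (i, j)).
Proof.
rewrite pair_big /= (reindex (@mxtens_index m n)) /=; first by apply: eq_bigr => -[].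
by exists (@mxtens_unindex m n) => k _; [exact: mxtens_indexK | exact: mxtens_unindexK].
Qed.

Lemma mxtens_index_inj {m n} : injective (@mxtens_index m n).
Proof. exact: can_inj (@mxtens_indexK m n). Qed.

Lemma mxtrace_tens_index (R : pzSemiRingType) m n (X : 'M[R]_(m * n)) :
  \tr X = \sum_a \sum_b X (idx (a, b)) (idx (a, b)).
Proof. exact: big_mxtens_index. Qed.

Lemma mxtrace_mulmxE (R : pzSemiRingType) n (M X : 'M[R]_n) :
  \tr (M *m X) = \sum_r \sum_s M r s * X s r.
Proof. by apply: eq_bigr => r _; rewrite mxE. Qed.

Lemma mxtrace_mulmx_tens_index (R : pzSemiRingType) m n (M X : 'M[R]_(m * n)) :
  \tr (M *m X) = \sum_a \sum_b \sum_c \sum_d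
    M (idx (a, b)) (idx (c, d)) * X (idx (c, d)) (idx (a, b)).
Proof.
rewrite mxtrace_mulmxE big_mxtens_index; do 2!(apply: eq_bigr => ? _).
exact: big_mxtens_index.
Qed.

Lemma mxtrace_mulmx_lincomb (R : comPzRingType) n (P A B : 'M[R]_n) a b :
  \tr (P *m (a *: A + b *: B)) = a * \tr (P *m A) + b * \tr (P *m B).
Proof. by rewrite mulmxDr -!scalemxAr mxtraceD !mxtraceZ. Qed.

Lemma sum_delta_mulmx_delta {R : pzSemiRingType} {T : finType} {m n p : nat}
    {f : T -> 'I_m} {g : T -> 'I_n} :
  injective g -> forall u (k : 'I_p),
  (\sum_t delta_mx (f t) (g t)) *m delta_mx (g u) k = delta_mx (f u) k :> 'M[R]_(m, p).
Proof.
move=> g_inj u k; rewrite mulmx_suml (bigD1 u) //= mul_delta_mx big1 ?addr0 // => t tu.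
by rewrite mul_delta_mx_0 // (inj_eq g_inj).
Qed.

Lemma delta_mulmx_sum_delta {R : pzSemiRingType} {T : finType} {m n p : nat}
    {f : T -> 'I_m} {g : T -> 'I_n} :
  injective f -> forall u (k : 'I_p),
  delta_mx k (f u) *m (\sum_t delta_mx (f t) (g t)) = delta_mx k (g u) :> 'M[R]_(p, n).
Proof.
move=> f_inj u k; rewrite mulmx_sumr (bigD1 u) //= mul_delta_mx big1 ?addr0 // => t tu.
by rewrite mul_delta_mx_0 // (inj_eq f_inj) eq_sym.
Qed.

Lemma entry_delta_mulmx (R : pzSemiRingType) m n (M : 'M[R]_(m, n)) i j :
  M i j = (delta_mx (0 : 'I_1) i *m M *m delta_mx j (0 : 'I_1)) 0 0.
Proof. by rewrite -rowE -colE !mxE. Qed.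

Lemma tensmx_delta (R : pzRingType) m n p q (i : 'I_m) (k : 'I_n) (j : 'I_p) (l : 'I_q) :
  delta_mx i k *t delta_mx j l = delta_mx (idx (i, j)) (idx (k, l)) :> 'M[R]_(_, _).
Proof.
apply/matrixP => x y; case: (mxtens_indexP x) => x1 x2; case: (mxtens_indexP y) => y1 y2.
rewrite tensmxE !mxE !(inj_eq mxtens_index_inj) !xpair_eqE.
by case: (x1 == i); case: (x2 == j); case: (y1 == k); case: (y2 == l);
  rewrite /= ?mulr1 ?mulr0 ?mul0r.
Qed.

Lemma tensmx1_entry (R : pzRingType) m n (a c : 'I_m) (b d : 'I_n) :
  (1%:M : 'M[R]_(m * n)) (idx (a, b)) (idx (c, d)) = (a == c)%:R * (b == d)%:R.
Proof.
by rewrite !mxE (inj_eq mxtens_index_inj) xpair_eqE; case: (a == c); case: (b == d);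
  rewrite ?mulr1 ?mulr0.
Qed.

Section Bilinear.
Variable R : comPzRingType.
Variables m n p q : nat.

Lemma tensmxDl (A B : 'M[R]_(m, n)) (M : 'M[R]_(p, q)) : (A + B) *t M = A *t M + B *t M.
Proof. by apply/matrixP => x y; rewrite !mxE mulrDl. Qed.

Lemma tensmxDr (M : 'M[R]_(m, n)) (A B : 'M[R]_(p, q)) : M *t (A + B) = M *t A + M *t B.
Proof. by apply/matrixP => x y; rewrite !mxE mulrDr. Qed.

Lemma tensmxZl a (A : 'M[R]_(m, n)) (M : 'M[R]_(p, q)) : (a *: A) *t M = a *: (A *t M).
Proof. by apply/matrixP => x y; rewrite !mxE mulrA. Qed.

Lemma tensmxZr a (M : 'M[R]_(m, n)) (A : 'M[R]_(p, q)) : M *t (a *: A) = a *: (M *t A).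
Proof. by apply/matrixP => x y; rewrite !mxE mulrCA. Qed.

End Bilinear.

Lemma mxtrace_mul_tens (R : comPzRingType) m n (M : 'M[R]_(m * n))
    (X1 : 'M[R]_m) (X2 : 'M[R]_n) :
  \tr (M *m (X1 *t X2)) = \sum_k1 \sum_l1 X1 l1 k1 *
    \sum_k2 \sum_l2 X2 l2 k2 * M (idx (k1, k2)) (idx (l1, l2)).
Proof.
rewrite mxtrace_mulmxE big_mxtens_index; apply: eq_bigr => k1 _.
under eq_bigr do rewrite big_mxtens_index.
rewrite exchange_big; apply: eq_bigr => l1 _.
rewrite mulr_sumr; apply: eq_bigr => k2 _; rewrite mulr_sumr; apply: eq_bigr => l2 _.
by rewrite tensmxE mulrC mulrA.
Qed.

Lemma mxtrace_mul_tens_r (R : comPzRingType) m n (M : 'M[R]_(m * n))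
    (X1 : 'M[R]_m) (X2 : 'M[R]_n) :
  \tr (M *m (X1 *t X2)) = \sum_k2 \sum_l2 X2 l2 k2 *
    \sum_k1 \sum_l1 X1 l1 k1 * M (idx (k1, k2)) (idx (l1, l2)).
Proof.
rewrite mxtrace_mulmxE big_mxtens_index exchange_big; apply: eq_bigr => k2 _ /=.
under eq_bigr do rewrite big_mxtens_index exchange_big.
rewrite exchange_big; apply: eq_bigr => l2 _ /=.
rewrite mulr_sumr; apply: eq_bigr => k1 _; rewrite mulr_sumr; apply: eq_bigr => l1 _.
by rewrite tensmxE mulrC -mulrA mulrCA.
Qed.

Section Swap.
Variable C : numClosedFieldType.

Lemma adj_sum (I : finType) m n (F : I -> 'M[C]_(m, n)) :
  adj (\sum_i F i) = \sum_i adj (F i).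
Proof. by apply/matrixP => x y; rewrite !mxE !summxE rmorph_sum; apply: eq_bigr => i; rewrite !mxE. Qed.

Lemma adj_delta m n (i : 'I_m) (j : 'I_n) : adj (delta_mx i j) = delta_mx j i :> 'M[C]_(_, _).
Proof. by apply/matrixP => x y; rewrite !mxE rmorph_nat andbC. Qed.

Definition bits4 := ('I_2 * 'I_2 * 'I_2 * 'I_2)%type.

(* [(a1, b1, a2, b2)] labels a basis vector of the registers A1, B1, A2, B2;
   [idx_pairs] is its index in the ((A1,B1),(A2,B2)) ordering of [tau1 *t tau2],
   [idx_regs] its index in the ((A1,A2),(B1,B2)) ordering. *)
Definition idx_pairs (t : bits4) : 'I_(2 * 2 * (2 * 2)) :=
  let: (a1, b1, a2, b2) := t in idx (idx (a1, b1), idx (a2, b2)).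
Definition idx_regs (t : bits4) : 'I_(2 * 2 * (2 * 2)) :=
  let: (a1, b1, a2, b2) := t in idx (idx (a1, a2), idx (b1, b2)).

Lemma idx_pairs_inj : injective idx_pairs.
Proof.
move=> [[[a1 b1] a2] b2] [[[c1 d1] c2] d2] /=.
move/mxtens_index_inj/pair_equal_spec => [/mxtens_index_inj/pair_equal_spec [-> ->]].
by move/mxtens_index_inj/pair_equal_spec => [-> ->].
Qed.

Lemma idx_regs_inj : injective idx_regs.
Proof.
move=> [[[a1 b1] a2] b2] [[[c1 d1] c2] d2] /=.
move/mxtens_index_inj/pair_equal_spec => [/mxtens_index_inj/pair_equal_spec [-> ->]].
by move/mxtens_index_inj/pair_equal_spec => [-> ->].
Qed.

Lemma idx_pairsP (k : 'I_(2 * 2 * (2 * 2))) : exists t, k = idx_pairs t.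
Proof.
case: (mxtens_indexP k) => k1 k2.
case: (mxtens_indexP k1) => a1 b1; case: (mxtens_indexP k2) => a2 b2.
by exists (a1, b1, a2, b2).
Qed.

Lemma sum_bits4 (V : nmodType) (F : bits4 -> V) : \sum_t F t =
  \sum_(a1 < 2) \sum_(b1 < 2) \sum_(a2 < 2) \sum_(b2 < 2) F (a1, b1, a2, b2).
Proof. by rewrite !pair_bigA; apply: eq_bigr => -[[[a1 b1] a2] b2]. Qed.

Lemma SW_sum_delta : SW C = \sum_t delta_mx (idx_regs t) (idx_pairs t).
Proof.
rewrite sum_bits4; do 4!(apply: eq_bigr => ? _).
by rewrite /ket !tensmx_delta trmx_delta mul_delta_mx.
Qed.

Lemma adj_SW : adj (SW C) = \sum_t delta_mx (idx_pairs t) (idx_regs t).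
Proof. by rewrite SW_sum_delta adj_sum; apply: eq_bigr => t _; rewrite adj_delta. Qed.

Lemma SW_conj_entry (N : 'M[C]_(2 * 2 * (2 * 2))) t u :
  (adj (SW C) *m N *m SW C) (idx_pairs t) (idx_pairs u) = N (idx_regs t) (idx_regs u).
Proof.
rewrite entry_delta_mulmx [RHS]entry_delta_mulmx adj_SW SW_sum_delta.
rewrite !mulmxA (delta_mulmx_sum_delta idx_pairs_inj).
by rewrite -!mulmxA (sum_delta_mulmx_delta idx_pairs_inj).
Qed.

Lemma SW_unitary : SW C *m adj (SW C) = 1%:M.
Proof.
apply: mulmx1C; apply/matrixP => x y.
have [t ->] := idx_pairsP x; have [u ->] := idx_pairsP y.
rewrite -[adj _]mulmx1 SW_conj_entry !mxE.
by rewrite (inj_eq idx_regs_inj) (inj_eq idx_pairs_inj).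
Qed.

Lemma SW_conj_tens_entry (N : 'M[C]_(2 * 2 * (2 * 2))) a1 b1 a2 b2 c1 d1 c2 d2 :
  (adj (SW C) *m N *m SW C) (idx (idx (a1, b1), idx (a2, b2))) (idx (idx (c1, d1), idx (c2, d2)))
  = N (idx (idx (a1, a2), idx (b1, b2))) (idx (idx (c1, c2), idx (d1, d2))).
Proof. exact: (SW_conj_entry N (a1, b1, a2, b2) (c1, d1, c2, d2)). Qed.

Lemma mxtrace_SW_tens (A B X1 X2 : 'M[C]_(2 * 2)) :
  \tr (adj (SW C) *m (A *t B) *m SW C *m (X1 *t X2)) =
  \sum_(a1 < 2) \sum_(b1 < 2) \sum_(c1 < 2) \sum_(d1 < 2) X1 (idx (c1, d1)) (idx (a1, b1)) *
  \sum_(a2 < 2) \sum_(b2 < 2) \sum_(c2 < 2) \sum_(d2 < 2) X2 (idx (c2, d2)) (idx (a2, b2)) *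
    (A (idx (a1, a2)) (idx (c1, c2)) * B (idx (b1, b2)) (idx (d1, d2))).
Proof.
rewrite mxtrace_mul_tens big_mxtens_index; do 2!(apply: eq_bigr => ? _).
rewrite big_mxtens_index; do 2!(apply: eq_bigr => ? _); congr (_ * _).
rewrite big_mxtens_index; do 2!(apply: eq_bigr => ? _).
rewrite big_mxtens_index; do 2!(apply: eq_bigr => ? _).
by rewrite SW_conj_tens_entry tensmxE.
Qed.

Lemma mxtrace_SW_tens_r (A B X1 X2 : 'M[C]_(2 * 2)) :
  \tr (adj (SW C) *m (A *t B) *m SW C *m (X1 *t X2)) =
  \sum_(a2 < 2) \sum_(b2 < 2) \sum_(c2 < 2) \sum_(d2 < 2) X2 (idx (c2, d2)) (idx (a2, b2)) *
  \sum_(a1 < 2) \sum_(b1 < 2) \sum_(c1 < 2) \sum_(d1 < 2) X1 (idx (c1, d1)) (idx (a1, b1)) *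
    (A (idx (a1, a2)) (idx (c1, c2)) * B (idx (b1, b2)) (idx (d1, d2))).
Proof.
rewrite mxtrace_mul_tens_r big_mxtens_index; do 2!(apply: eq_bigr => ? _).
rewrite big_mxtens_index; do 2!(apply: eq_bigr => ? _); congr (_ * _).
rewrite big_mxtens_index; do 2!(apply: eq_bigr => ? _).
rewrite big_mxtens_index; do 2!(apply: eq_bigr => ? _).
by rewrite SW_conj_tens_entry tensmxE.
Qed.

Lemma pFprimeE (tau1 tau2 : 'M[C]_(2 * 2)) i j :
  pFprime tau1 tau2 i j
  = \tr (adj (SW C) *m (bell C i j *t bell C i j) *m SW C *m (tau1 *t tau2)).
Proof.
rewrite /pFprime /projB /projA !mulmxA -[_ *m SW C *m adj (SW C)]mulmxA SW_unitary mulmx1.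
by rewrite -[_ *m (bell C i j *t 1%:M)]mulmxA tensmx_mul mulmx1 mul1mx.
Qed.

End Swap.

Section SymmetricInvolution.
Variables (R : comPzRingType) (n : nat) (M : 'M[R]_n.+1).

Lemma trmx_expr_sym k : M^T = M -> (M ^+ k)^T = M ^+ k.
Proof.
move=> M_sym; elim: k => [|k IHk]; first by rewrite !expr0 trmx1.
by rewrite exprS -mulmxE trmx_mul IHk M_sym mulmxE -exprSr exprS.
Qed.

Lemma expr_invol_mulmx k : M *m M = 1%:M -> M ^+ k *m M ^+ k = 1%:M.
Proof. by rewrite !mulmxE => MM; rewrite -exprMn_comm // MM expr1n. Qed.

End SymmetricInvolution.

Section Bell.
Variable C : numClosedFieldType.

Lemma PauliX_sym : (PauliX C)^T = PauliX C.
Proof. by apply/matrixP => r s; rewrite !mxE eq_sym. Qed.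

Lemma PauliZ_sym : (PauliZ C)^T = PauliZ C.
Proof. by apply/matrixP => r s; rewrite !mxE eq_sym; case: eqP => // ->. Qed.

Lemma PauliX_real : map_mx Num.conj (PauliX C) = PauliX C.
Proof. by apply/matrixP => r s; rewrite !mxE; case: eqP; rewrite ?conjC0 ?conjC1. Qed.

Lemma PauliZ_real : map_mx Num.conj (PauliZ C) = PauliZ C.
Proof.
by apply/matrixP => r s; rewrite !mxE; case: (r == s); case: (r == 0);
  rewrite ?conjC0 ?conjC1 ?conjCN1.
Qed.

Lemma PauliX_invol : PauliX C *m PauliX C = 1%:M.
Proof.
apply/matrixP => r s; rewrite !mxE !big_ord_recl big_ord0 !mxE.
by case: r => [[|[|//]] ?]; case: s => [[|[|//]] ?];
  rewrite /= ?(mulr0, mul0r, mulr1, addr0, add0r).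
Qed.

Lemma PauliZ_invol : PauliZ C *m PauliZ C = 1%:M.
Proof.
apply/matrixP => r s; rewrite !mxE !big_ord_recl big_ord0 !mxE.
by case: r => [[|[|//]] ?]; case: s => [[|[|//]] ?];
  rewrite /= ?(mulr0, mul0r, mulr1, addr0, add0r, mulrNN).
Qed.

Definition pauli (i j : 'I_2) : 'M[C]_2 := PauliX C ^+ i *m PauliZ C ^+ j.

Lemma pauli_orthogonal i j : pauli i j *m (pauli i j)^T = 1%:M.
Proof.
rewrite /pauli trmx_mul !trmx_expr_sym ?PauliX_sym ?PauliZ_sym //.
rewrite mulmxA -(mulmxA (PauliX C ^+ i)) expr_invol_mulmx ?PauliZ_invol // mulmx1.
exact/expr_invol_mulmx/PauliX_invol.
Qed.

Lemma pauli_real i j : map_mx Num.conj (pauli i j) = pauli i j.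
Proof.
rewrite /pauli map_mxM; congr (_ *m _); rewrite rmorphXn; congr (_ ^+ _).
  exact: PauliX_real.
exact: PauliZ_real.
Qed.

Lemma pauli_rows_orthonormal i j x y :
  \sum_a pauli i j x a * pauli i j y a = (x == y)%:R.
Proof.
have := congr1 (fun M : 'M_2 => M x y) (pauli_orthogonal i j); rewrite !mxE => <-.
by apply: eq_bigr => a _; rewrite [_^T _ _]mxE.
Qed.

Lemma pauli_cols_orthonormal i j x y :
  \sum_a pauli i j a x * pauli i j a y = (x == y)%:R.
Proof.
have := congr1 (fun M : 'M_2 => M x y) (mulmx1C (pauli_orthogonal i j)); rewrite !mxE => <-.
by apply: eq_bigr => a _; rewrite [_^T _ _]mxE.
Qed.

Lemma conj_pauli i j x y : (pauli i j x y)^* = pauli i j x y.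
Proof. by have := congr1 (fun M : 'M_2 => M x y) (pauli_real i j); rewrite mxE. Qed.

Lemma phi_plus_entry x y k : phi_plus C (idx (x, y)) k = (x == y)%:R.
Proof.
case: (mxtens_indexP k) => k1 k2; rewrite [k1]ord1 [k2]ord1.
rewrite /phi_plus /ket0 /ket1 /ket !tensmx_delta !mxE eqxx !andbT.
rewrite !(inj_eq mxtens_index_inj) !xpair_eqE.
by case: x => [[|[|//]] ?]; case: y => [[|[|//]] ?]; rewrite ?addr0 ?add0r.
Qed.

Lemma psi_un_entry i j a b k : psi_un C i j (idx (a, b)) k = pauli i j b a.
Proof.
rewrite /psi_un mxE big_mxtens_index -(sum_eq_mulr a (pauli i j b)).
rewrite -(sum_diag2 (fun x y => (x == a)%:R * pauli i j b y)).
do 2!(apply: eq_bigr => ? _).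
by rewrite tensmxE phi_plus_entry [1%:M _ _]mxE eq_sym mulrC.
Qed.

Lemma bell_entry i j a b c d :
  bell C i j (idx (a, b)) (idx (c, d)) = 2%:R^-1 * (pauli i j b a * pauli i j d c).
Proof.
rewrite /bell mxE [(_ *m _) _ _]mxE big_ord1 /adj [map_mx _ _ _ _]mxE [_^T _ _]mxE.
by rewrite !psi_un_entry conj_pauli mul1r.
Qed.

Lemma bell00_entry a b c d :
  bell C 0 0 (idx (a, b)) (idx (c, d)) = 2%:R^-1 * ((a == b)%:R * (c == d)%:R).
Proof. by rewrite bell_entry /pauli !expr0 mulmx1 !mxE ![_ == a]eq_sym ![_ == c]eq_sym. Qed.

Lemma bell_ptrace_l i j x y :
  \sum_a bell C i j (idx (a, x)) (idx (a, y)) = 2%:R^-1 * (x == y)%:R.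
Proof. by rewrite -(pauli_rows_orthonormal i j) mulr_sumr; apply: eq_bigr => a _; rewrite bell_entry. Qed.

Lemma bell_ptrace_r i j x y :
  \sum_b bell C i j (idx (x, b)) (idx (y, b)) = 2%:R^-1 * (x == y)%:R.
Proof. by rewrite -(pauli_cols_orthonormal i j) mulr_sumr; apply: eq_bigr => a _; rewrite bell_entry. Qed.

Lemma inv4_sqr : 4%:R^-1 = 2%:R^-1 * 2%:R^-1 :> C.
Proof. by rewrite -invfM -natrM. Qed.

Lemma bell_ricochet_l i j x y x' y' :
  \sum_a \sum_c bell C i j (idx (a, x)) (idx (c, y)) * bell C i j (idx (a, x')) (idx (c, y'))
  = 4%:R^-1 * ((x == x')%:R * (y == y')%:R).
Proof.
rewrite -!(pauli_rows_orthonormal i j) big_distrl mulr_sumr; apply: eq_bigr => a _ /=.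
rewrite mulr_sumr mulr_sumr; apply: eq_bigr => c _.
by rewrite !bell_entry inv4_sqr mulrACA; congr (_ * _); exact: mulrACA.
Qed.

Lemma bell_ricochet_r i j x y x' y' :
  \sum_a \sum_c bell C i j (idx (x, a)) (idx (y, c)) * bell C i j (idx (x', a)) (idx (y', c))
  = 4%:R^-1 * ((x == x')%:R * (y == y')%:R).
Proof.
rewrite -!(pauli_cols_orthonormal i j) big_distrl mulr_sumr; apply: eq_bigr => a _ /=.
rewrite mulr_sumr mulr_sumr; apply: eq_bigr => c _.
by rewrite !bell_entry inv4_sqr mulrACA; congr (_ * _); exact: mulrACA.
Qed.

End Bell.

Section Evaluation.
Variable C : numClosedFieldType.
Implicit Types (tau : 'M[C]_(2 * 2)) (i j : 'I_2).

Lemma sum4_bell00 (K : 'I_2 -> 'I_2 -> 'I_2 -> 'I_2 -> C) :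
  \sum_a \sum_b \sum_c \sum_d bell C 0 0 (idx (c, d)) (idx (a, b)) * K a b c d
  = 2%:R^-1 * \sum_a \sum_c K a a c c.
Proof.
symmetry; rewrite mulr_sumr; under eq_bigr do rewrite mulr_sumr.
rewrite -(sum4_eq12_eq34 (fun a b c d => 2%:R^-1 * K a b c d)).
apply: eq_bigr => a _; apply: eq_bigr => b _; apply: eq_bigr => c _; apply: eq_bigr => d _.
by rewrite bell00_entry [(c == d)%:R * _]mulrC mulrCA mulrA.
Qed.

Lemma sum_bell_mx1_l i j x y x' y' :
  \sum_a \sum_c bell C i j (idx (a, x)) (idx (c, y)) * (1%:M : 'M_(2 * 2)) (idx (a, x')) (idx (c, y'))
  = 2%:R^-1 * ((x == y)%:R * (x' == y')%:R).
Proof.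
rewrite mulrA -(bell_ptrace_l C i j) mulr_suml.
rewrite -(sum_diag2 (fun a c => bell C i j (idx (a, x)) (idx (c, y)) * (x' == y')%:R)).
by apply: eq_bigr => a _; apply: eq_bigr => c _; rewrite tensmx1_entry mulrCA.
Qed.

Lemma sum_bell_mx1_r i j x y x' y' :
  \sum_a \sum_c bell C i j (idx (x, a)) (idx (y, c)) * (1%:M : 'M_(2 * 2)) (idx (x', a)) (idx (y', c))
  = 2%:R^-1 * ((x == y)%:R * (x' == y')%:R).
Proof.
rewrite mulrA -(bell_ptrace_r C i j) mulr_suml.
rewrite -(sum_diag2 (fun a c => bell C i j (idx (x, a)) (idx (y, c)) * (x' == y')%:R)).
apply: eq_bigr => a _; apply: eq_bigr => c _.
by rewrite tensmx1_entry [(x' == y')%:R * _]mulrC mulrCA.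
Qed.

Lemma fid00E tau : fid00 tau = 2%:R^-1 * \sum_a \sum_c tau (idx (c, c)) (idx (a, a)).
Proof.
symmetry; rewrite mulr_sumr; under eq_bigr do rewrite mulr_sumr.
rewrite -(sum4_eq12_eq34 (fun a b c d => 2%:R^-1 * tau (idx (c, d)) (idx (a, b)))).
rewrite /fid00 mxtrace_mulmx_tens_index; do 4!(apply: eq_bigr => ? _).
by rewrite bell00_entry mulrCA mulrA.
Qed.

Lemma sum_ord2_half : \sum_(a < 2) 2%:R^-1 = 1 :> C.
Proof. by rewrite sumr_const card_ord -[LHS]mulr_natr mulVf // pnatr_eq0. Qed.

Lemma mxtrace_bell i j : \tr (bell C i j) = 1.
Proof.
rewrite mxtrace_tens_index -sum_ord2_half; apply: eq_bigr => a _.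
by rewrite bell_ptrace_r eqxx mulr1.
Qed.

Lemma fid00_bell00 : fid00 (bell C 0 0) = 1.
Proof.
rewrite fid00E (eq_bigr (fun=> 1)) => [|a _]; last first.
  by rewrite -sum_ord2_half; apply: eq_bigr => c _; rewrite bell00_entry !eqxx mulr1 mulr1.
by rewrite sumr_const card_ord mulVf // pnatr_eq0.
Qed.

Lemma mxtrace_div4E tau : \tr tau / 4%:R = \sum_a \sum_b \sum_c \sum_d
  ((a == c)%:R * (b == d)%:R) * (tau (idx (c, d)) (idx (a, b)) / 4%:R).
Proof.
rewrite sum4_eq13_eq24 mxtrace_tens_index mulr_suml.
by apply: eq_bigr => a _; rewrite mulr_suml.
Qed.

Lemma fid00_div4E tau : fid00 tau / 4%:R = \sum_a \sum_b \sum_c \sum_d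
  ((a == b)%:R * (c == d)%:R) * (tau (idx (c, d)) (idx (a, b)) * (2%:R^-1 / 4%:R)).
Proof.
rewrite sum4_eq12_eq34 fid00E mulrAC mulrC mulr_suml.
by apply: eq_bigr => a _; rewrite mulr_suml.
Qed.

Lemma pprime_bell00_l i j tau : pprime (bell C 0 0) tau i j = \tr tau / 4%:R.
Proof.
rewrite mxtrace_div4E /pprime /projA mxtrace_SW_tens_r.
apply: eq_bigr => a _; apply: eq_bigr => b _; apply: eq_bigr => c _; apply: eq_bigr => d _.
by rewrite sum4_bell00 sum_bell_mx1_l inv4_sqr; ring.
Qed.

Lemma pprime_bell00_r i j tau : pprime tau (bell C 0 0) i j = \tr tau / 4%:R.
Proof.
rewrite mxtrace_div4E /pprime /projA mxtrace_SW_tens.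
apply: eq_bigr => a _; apply: eq_bigr => b _; apply: eq_bigr => c _; apply: eq_bigr => d _.
by rewrite sum4_bell00 sum_bell_mx1_r inv4_sqr; ring.
Qed.

Lemma pFprime_bell00_l i j tau : pFprime (bell C 0 0) tau i j = fid00 tau / 4%:R.
Proof.
rewrite fid00_div4E pFprimeE mxtrace_SW_tens_r.
apply: eq_bigr => a _; apply: eq_bigr => b _; apply: eq_bigr => c _; apply: eq_bigr => d _.
by rewrite sum4_bell00 bell_ricochet_l; ring.
Qed.

Lemma pFprime_bell00_r i j tau : pFprime tau (bell C 0 0) i j = fid00 tau / 4%:R.
Proof.
rewrite fid00_div4E pFprimeE mxtrace_SW_tens.
apply: eq_bigr => a _; apply: eq_bigr => b _; apply: eq_bigr => c _; apply: eq_bigr => d _.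
by rewrite sum4_bell00 bell_ricochet_r; ring.
Qed.

Lemma pprime_lincomb_l (x y : C) (A B : 'M[C]_(2 * 2)) tau i j :
  pprime (x *: A + y *: B) tau i j = x * pprime A tau i j + y * pprime B tau i j.
Proof. by rewrite /pprime tensmxDl !tensmxZl mxtrace_mulmx_lincomb. Qed.

Lemma pprime_lincomb_r (x y : C) (A B : 'M[C]_(2 * 2)) tau i j :
  pprime tau (x *: A + y *: B) i j = x * pprime tau A i j + y * pprime tau B i j.
Proof. by rewrite /pprime tensmxDr !tensmxZr mxtrace_mulmx_lincomb. Qed.

Lemma pFprime_lincomb_l (x y : C) (A B : 'M[C]_(2 * 2)) tau i j :
  pFprime (x *: A + y *: B) tau i j = x * pFprime A tau i j + y * pFprime B tau i j.
Proof. by rewrite /pFprime tensmxDl !tensmxZl mxtrace_mulmx_lincomb. Qed.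

Lemma pFprime_lincomb_r (x y : C) (A B : 'M[C]_(2 * 2)) tau i j :
  pFprime tau (x *: A + y *: B) i j = x * pFprime tau A i j + y * pFprime tau B i j.
Proof. by rewrite /pFprime tensmxDr !tensmxZr mxtrace_mulmx_lincomb. Qed.

Lemma fid00_lincomb (x y : C) (A B : 'M[C]_(2 * 2)) :
  fid00 (x *: A + y *: B) = x * fid00 A + y * fid00 B.
Proof. exact: mxtrace_mulmx_lincomb. Qed.

Lemma fid00_mix (p : C) tau : fid00 (p *: bell C 0 0 + (1 - p) *: tau) = p + (1 - p) * fid00 tau.
Proof. by rewrite fid00_lincomb fid00_bell00 mulr1. Qed.

Lemma pprime_mix (p : C) (sigma1 sigma2 : 'M[C]_(2 * 2)) i j :
  \tr sigma1 = 1 -> \tr sigma2 = 1 ->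
  pprime (p *: bell C 0 0 + (1 - p) *: sigma1) (p *: bell C 0 0 + (1 - p) *: sigma2) i j
  = (2%:R * p - p ^+ 2 + 4%:R * (1 - p) ^+ 2 * pprime sigma1 sigma2 i j) / 4%:R.
Proof.
move=> tr1 tr2; rewrite pprime_lincomb_l !pprime_lincomb_r.
by rewrite !pprime_bell00_l pprime_bell00_r mxtrace_bell tr1 tr2; field.
Qed.

Lemma pFprime_mix (p : C) (sigma1 sigma2 : 'M[C]_(2 * 2)) i j :
  pFprime (p *: bell C 0 0 + (1 - p) *: sigma1) (p *: bell C 0 0 + (1 - p) *: sigma2) i j
  = (p ^+ 2 + p * ((1 - p) * fid00 sigma1) + p * ((1 - p) * fid00 sigma2)
     + 4%:R * (1 - p) ^+ 2 * pFprime sigma1 sigma2 i j) / 4%:R.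
Proof.
rewrite pFprime_lincomb_l !pFprime_lincomb_r.
by rewrite !pFprime_bell00_l pFprime_bell00_r fid00_bell00; field.
Qed.

End Evaluation.

Theorem lemma5 (C : numClosedFieldType) (F p : C)
  (sigma1 sigma2 rho1 rho2 : 'M[C]_(2 * 2)) :
  0 <= F -> F <= 1 -> 0 <= p -> p <= F ->
  density sigma1 -> density sigma2 ->
  rho1 = p *: bell C 0 0 + (1 - p) *: sigma1 ->
  rho2 = p *: bell C 0 0 + (1 - p) *: sigma2 ->
  S_pF p F rho1 -> S_pF p F rho2 ->
  forall i j : 'I_2,
    pprime rho1 rho2 i j
      = p / 2%:R - p ^+ 2 / 4%:R + (1 - p) ^+ 2 * pprime sigma1 sigma2 i j
    /\ Fprime rho1 rho2 i j
      = (2%:R * p * F - p ^+ 2 + 4%:R * (1 - p) ^+ 2 * pFprime sigma1 sigma2 i j)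
        / (2%:R * p - p ^+ 2 + 4%:R * (1 - p) ^+ 2 * pprime sigma1 sigma2 i j).
Proof.
move=> _ _ _ _ [_ tr1] [_ tr2] -> -> [_ fid1] [_ fid2] i j.
rewrite fid00_mix in fid1; rewrite fid00_mix in fid2.
(* valid even when the denominator vanishes, since x / 0 = 0 *)
rewrite /Fprime pprime_mix // pFprime_mix divr_mulr_cancel ?invr_eq0 ?pnatr_eq0 //.
split; first by field.
congr (_ / _); have -> : 2%:R * p * F = p * F + p * F by ring.
by rewrite -{1}fid1 -fid2; ring.
Qed.
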